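(* Let $n\ge 1$ and let $M\le N$ be integers. For each $s\in\{0,1,\dots,n\}$, let $\mathcal P_s$ be the set of pure diagrams $\pi(d_0,\dots,d_t)$ lying in $B_{M,N}$ with codimension $t\ge s$, partially ordered as described in the context. Then every maximal chain in $\mathcal P_s$ is a basis of the $\mathbb Q$-vector space $B^s_{M,N}$.
   Context: $B_{M,N}$ is the $\mathbb Q$-vector space of arrays $\beta=(\beta_{i,j})$ indexed by $0\le i\le n$, $j\in\mathbb Z$, with $\beta_{i,j}=0$ unless $M+i\le j\le N+i$ (so $\dim B_{M,N}=(n+1)(N-M+1)$). For $0\le s\le n$, $B^s_{M,N}$ is the subspace of those $\beta$ satisfying the Herzog–Kühl equations $\sum_{i=0}^n\sum_{j}(-1)^i\beta_{i,j}\,j^m=0$ for $m=0,1,\dots,s-1$. For integers $d_0<d_1<\dots<d_t$ with $0\le t\le n$, the pure diagram $\pi(d_0,\dots,d_t)$ is the array whose entry in position $(i,d_i)$ is $(-1)^i\prod_{0\le j\le t,\,j\ne i}\frac{1}{d_j-d_i}$ for $i=0,\dots,t$, and whose other entries are $0$; its codimension is $t$. It lies in $B_{M,N}$ iff $M+i\le d_i\le N+i$ for all $i$. Partial order: $\pi(d_0,\dots,d_t)\le\pi(d'_0,\dots,d'_u)$ iff $t\ge u$ and $d_i\le d'_i$ for $i=0,\dots,u$. A chain is a totally ordered subset; a maximal chain of a set is a chain in that set not properly contained in another chain in that set. *)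

From mathcomp Require Import all_boot all_order all_algebra.
Set Implicit Arguments. Unset Strict Implicit. Unset Printing Implicit Defensive.
Import Order.TTheory GRing.Theory Num.Theory.
Local Open Scope ring_scope.

Definition array := nat -> int -> rat.

Definition inB (n : nat) (M N : int) (beta : array) : Prop :=
  forall (i : nat) (j : int), beta i j != 0 ->
    (i <= n)%N /\ M + i%:Z <= j /\ j <= N + i%:Z.

(* Herzog--Kuehl equations for m = 0, ..., s-1.  For fixed i the sum over j
   runs over the band M+i <= j <= N+i (j = M + i + k, 0 <= k <= N - M),
   which contains every possibly nonzero entry of an element of B_{M,N}. *)
Definition HK (n : nat) (M N : int) (s : nat) (beta : array) : Prop :=
  forall m : nat, (m < s)%N ->
    \sum_(i < n.+1) \sum_(k < `|N - M|%N.+1)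
       (-1) ^+ i * beta i (M + i%:Z + k%:Z) * ((M + i%:Z + k%:Z)%:~R) ^+ m = 0.

Definition inBs (n : nat) (M N : int) (s : nat) (beta : array) : Prop :=
  inB n M N beta /\ HK n M N s beta.

Definition pure (d : seq int) : array :=
  fun i j =>
    if (i < size d)%N && (j == nth 0 d i) then
      (-1) ^+ i * \prod_(k < size d | k != i :> nat)
                    ((nth 0 d k - nth 0 d i)%:~R)^-1
    else 0.

(* d is the degree sequence of a pure diagram in B_{M,N} of codimension
   t = size d - 1 with s <= t <= n, i.e. an element of P_s. *)
Definition inP (n : nat) (M N : int) (s : nat) (d : seq int) : Prop :=
  (s < size d)%N /\ (size d <= n.+1)%N /\ sorted <%R d /\
  forall i : nat, (i < size d)%N ->
    M + i%:Z <= nth 0 d i /\ nth 0 d i <= N + i%:Z.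

Definition pd_le (d d' : seq int) : Prop :=
  (size d' <= size d)%N /\
  forall i : nat, (i < size d')%N -> nth 0 d i <= nth 0 d' i.

(* A chain in P_s (a set of pure diagrams, given by their degree sequences;
   d |-> pure d is injective on P_s). *)
Definition chain (n : nat) (M N : int) (s : nat) (C : seq int -> Prop) : Prop :=
  (forall d, C d -> inP n M N s d) /\
  (forall d d', C d -> C d' -> pd_le d d' \/ pd_le d' d).

Definition maximal_chain (n : nat) (M N : int) (s : nat) (C : seq int -> Prop) : Prop :=
  chain n M N s C /\
  forall C' : seq int -> Prop, chain n M N s C' ->
    (forall d, C d -> C' d) -> forall d, C' d -> C d.

Definition lincomb (ds : seq (seq int)) (c : seq int -> rat) : array :=
  fun i j => \sum_(d <- ds) c d * pure d i j.

Definition is_basis_Bs (n : nat) (M N : int) (s : nat) (C : seq int -> Prop) : Prop :=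
  (forall (ds : seq (seq int)) (c : seq int -> rat),
     uniq ds -> (forall d, d \in ds -> C d) ->
     (forall i j, lincomb ds c i j = 0) ->
     forall d, d \in ds -> c d = 0) /\
  (forall beta : array,
     inBs n M N s beta <->
     exists (ds : seq (seq int)) (c : seq int -> rat),
       (forall d, d \in ds -> C d) /\ forall i j, beta i j = lincomb ds c i j).

From mathcomp Require Import all_boot all_order all_algebra.
From mathcomp Require Import zify ring lra.
From Stdlib Require Import Classical.
Import Order.TTheory GRing.Theory Num.Theory.
Local Open Scope ring_scope.

Set Implicit Arguments. Unset Strict Implicit. Unset Printing Implicit Defensive.

(* Record a degree sequence d in P_s by its heights h_i(d) = d_i - M - i for
   i < size d, and h_i(d) = N - M + 1 past its end.  On P_s the order of pure
   diagrams is the pointwise order of heights, so the total height is a strictly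
   monotone rank with values 0 .. R = (s+1)(N-M) + (n-s)(N-M+1), and any d < d'
   can be refined by raising one height by one.  Hence a maximal chain has an
   element of every rank, i.e. R + 1 = dim B_{M,N} - s pure diagrams.  These lie
   in B^s (their Herzog-Kuehl sums are Lagrange interpolation identities at the
   nodes d_i) and are linearly independent (a chain is triangular at the entry
   where its minimum differs from the next element).  The s Herzog-Kuehl forms are
   independent on the unit arrays at (b, M + b), b < s (Vandermonde), so these
   diagrams and unit arrays form a basis of B_{M,N}, and the diagrams span B^s. *)

(** * Ranks of degree sequences *)

Lemma pd_le_refl d : pd_le d d.
Proof. by split=> // i _. Qed.

Lemma pd_le_trans d1 d2 d3 : pd_le d1 d2 -> pd_le d2 d3 -> pd_le d1 d3.
Proof.
move=> [s12 h12] [s23 h23]; split; first exact: leq_trans s23 s12.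
by move=> i hi; apply: le_trans (h12 i (leq_trans hi s23)) (h23 i hi).
Qed.

Section RankFunction.

Variables (n : nat) (M N : int) (s : nat).
Local Notation inPs := (inP n M N s).

Lemma inP_nth_lt d i j : inPs d -> (i < j < size d)%N -> nth 0 d i < nth 0 d j.
Proof.
move=> [_ [_ [d_sorted _]]] /andP [ij jd].
by apply: (sorted_ltn_nth lt_trans) => //; rewrite inE (ltn_trans ij).
Qed.

Lemma inP_nth_inj d i j : inPs d -> (i < size d)%N -> (j < size d)%N ->
  nth 0 d i = nth 0 d j -> i = j.
Proof.
move=> dP id jd eij; case: (ltngtP i j) => // [ij | ji].
  by have := inP_nth_lt dP (introT andP (conj ij jd)); rewrite eij ltxx.
by have := inP_nth_lt dP (introT andP (conj ji id)); rewrite eij ltxx.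
Qed.

Definition pd_height (d : seq int) (i : nat) : int :=
  if (i < size d)%N then nth 0 d i - M - i%:Z else N - M + 1.

Definition pd_rank (d : seq int) : int := \sum_(i < n.+1) pd_height d i.

Lemma pd_height_le d d' i : inPs d -> pd_le d d' -> pd_height d i <= pd_height d' i.
Proof.
move=> [_ [_ [_ dB]]] [sd' le_dd']; rewrite /pd_height.
case: (ltnP i (size d')) => [id' | d'i]; first by rewrite (leq_trans id' sd') lerD2r lerD2r le_dd'.
case: ltnP => // id; have [_] := dB i id; lia.
Qed.

Lemma pd_height_inj d d' : inPs d -> inPs d' ->
  (forall i, (i <= n)%N -> pd_height d i = pd_height d' i) -> d = d'.
Proof.
move=> dP d'P eqh.
have short e e' : inPs e -> (forall i, (i <= n)%N -> pd_height e i = pd_height e' i) ->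
    (size e <= size e')%N.
  move=> [_ [en [_ eB]]] eqh'; rewrite leqNgt; apply/negP => e'e.
  have := eqh' _ (leq_trans e'e en); rewrite /pd_height e'e ltnn.
  have [_] := eB _ e'e; lia.
have size_eq : size d = size d'.
  by apply/eqP; rewrite eqn_leq !short // => i /eqh.
apply: (eq_from_nth (x0 := 0)) => // i id.
have := eqh i; rewrite /pd_height -size_eq id.
have [_ [dn _]] := dP; move=> /(_ (leq_trans id dn)); lia.
Qed.

Lemma pd_rank_le d d' : inPs d -> pd_le d d' -> pd_rank d <= pd_rank d'.
Proof. by move=> dP le_dd'; apply: ler_sum => i _; apply: pd_height_le. Qed.

Lemma pd_rank_lt d d' : inPs d -> inPs d' -> pd_le d d' -> d <> d' -> pd_rank d < pd_rank d'.
Proof.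
move=> dP d'P le_dd' neq_dd'.
have [/existsP [i lt_i] | /existsPn ge_h] :=
  boolP [exists i : 'I_n.+1, pd_height d i < pd_height d' i].
  rewrite /pd_rank (bigD1 i) //= [X in _ < X](bigD1 i) //=.
  by apply: ltr_leD lt_i _; apply: ler_sum => j _; apply: pd_height_le.
exfalso; apply: neq_dd'; apply: pd_height_inj => // i ni.
apply/eqP; rewrite eq_le pd_height_le //=.
by have := ge_h (Ordinal (ni : (i < n.+1)%N)); rewrite -leNgt.
Qed.

Definition pd_bot : seq int := mkseq (fun i => M + i%:Z) n.+1.
Definition pd_top : seq int := mkseq (fun i => N + i%:Z) s.+1.

Hypotheses (M_le_N : M <= N) (s_le_n : (s <= n)%N).

Lemma inP_mkseq_shift (c : int) k : M <= c <= N -> (s < k <= n.+1)%N ->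
  inPs (mkseq (fun i => c + i%:Z) k).
Proof.
move=> /andP [Mc cN] /andP [sk kn]; rewrite /inP size_mkseq; do 2!split=> //; split.
  apply/(sortedP 0) => i; rewrite size_mkseq => i_lt.
  by rewrite !nth_mkseq ?(ltnW i_lt) // ltrD2l ltz_nat.
by move=> i i_lt; rewrite nth_mkseq // lerD2r Mc lerD2r cN.
Qed.

Lemma inP_bot : inPs pd_bot.
Proof. by apply: inP_mkseq_shift; rewrite ?lexx ?M_le_N ?ltnS ?s_le_n ?leqnn. Qed.

Lemma inP_top : inPs pd_top.
Proof. by apply: inP_mkseq_shift; rewrite ?lexx ?M_le_N ?ltnS ?s_le_n ?leqnn. Qed.

Lemma pd_le_bot d : inPs d -> pd_le pd_bot d.
Proof.
move=> [_ [dn [_ dB]]]; split=> [|i id]; first by rewrite size_mkseq.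
by rewrite nth_mkseq ?(leq_trans id dn) //; case: (dB i id).
Qed.

Lemma pd_le_top d : inPs d -> pd_le d pd_top.
Proof.
move=> [sd [_ [_ dB]]]; split=> [|i]; rewrite size_mkseq // => i_lt.
by rewrite nth_mkseq //; case: (dB i (leq_trans i_lt sd)).
Qed.

Lemma pd_rank_bot : pd_rank pd_bot = 0.
Proof.
rewrite /pd_rank big1 // => i _.
by rewrite /pd_height size_mkseq ltn_ord nth_mkseq //; ring.
Qed.

Lemma pd_rank_top : pd_rank pd_top = s.+1%:Z * (N - M) + (n - s)%:Z * (N - M + 1).
Proof.
rewrite /pd_rank -(big_mkord xpredT) (big_cat_nat _ (n := s.+1)) //=.
rewrite (eq_big_nat _ _ (F2 := fun=> N - M)) => [|i /andP [_ i_lt]]; last first.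
  by rewrite /pd_height size_mkseq i_lt nth_mkseq //; ring.
rewrite [X in _ + X](eq_big_nat _ _ (F2 := fun=> N - M + 1)) => [|i /andP [si _]]; last first.
  by rewrite /pd_height size_mkseq ltnNge si.
by rewrite !sumr_const_nat subn0 subSS -[_ *+ s.+1]mulr_natl -[_ *+ (n - s)]mulr_natl !natz.
Qed.

Lemma pd_rank_succ d e i : (i <= n)%N ->
  pd_height e i = pd_height d i + 1 ->
  (forall j, j != i -> pd_height e j = pd_height d j) -> pd_rank e = pd_rank d + 1.
Proof.
move=> ni ei ej; pose i' : 'I_n.+1 := Ordinal (ni : (i < n.+1)%N).
rewrite /pd_rank (bigD1 i') //= [in RHS](bigD1 i') //= ei.
by rewrite (eq_bigr (pd_height d \o val)) => [|j ji]; [ring | apply: ej].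
Qed.

Definition pd_raise (d : seq int) (i : nat) : seq int := set_nth 0 d i (nth 0 d i + 1).

Lemma size_pd_raise d i : (i < size d)%N -> size (pd_raise d i) = size d.
Proof. by move=> id; rewrite size_set_nth; apply/maxn_idPr. Qed.

Lemma nth_pd_raise d i k :
  nth 0 (pd_raise d i) k = if k == i then nth 0 d i + 1 else nth 0 d k.
Proof. exact: nth_set_nth. Qed.

Lemma pd_raise_cover d i : inPs d -> (i < size d)%N -> nth 0 d i < N + i%:Z ->
    ((i.+1 < size d)%N -> nth 0 d i + 1 < nth 0 d i.+1) ->
  [/\ inPs (pd_raise d i), pd_le d (pd_raise d i) & pd_rank (pd_raise d i) = pd_rank d + 1].
Proof.
move=> dP id d_i_lt next_lt.
have size_e := size_pd_raise id; have nth_e := nth_pd_raise d i.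
have [sd [dn [_ dB]]] := dP.
split.
- rewrite /inP size_e; do 2!split=> //; split.
    apply/(sortedP 0) => k; rewrite size_e => k_lt; rewrite !nth_e.
    have [ki | ki] := eqVneq k i; first by subst k; rewrite (gtn_eqF (ltnSn i)); apply: next_lt.
    have [k1i | _] := eqVneq k.+1 i; last by apply: (inP_nth_lt dP); rewrite ltnSn.
    rewrite -k1i; apply: (@lt_le_trans _ _ (nth 0 d k.+1)); last by rewrite lerDl.
    by apply: (inP_nth_lt dP); rewrite ltnSn.
  move=> k k_lt; rewrite nth_e; case: eqP => [-> | _]; last exact: dB.
  have [lo _] := dB i id; split; last by rewrite lezD1.
  by rewrite (le_trans lo) ?lerDl.
- split=> [|k _]; first by rewrite size_e.
  by rewrite nth_e; case: eqP => [-> | _] //; rewrite lerDl.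
- apply: (pd_rank_succ (i := i)); first exact: leq_trans id dn.
    by rewrite /pd_height size_e id nth_e eqxx; ring.
  by move=> j /negbTE ji; rewrite /pd_height size_e nth_e ji.
Qed.

Lemma pd_truncate_cover d : inPs d -> (s.+1 < size d)%N ->
    nth 0 d (size d).-1 = N + (size d).-1%:Z ->
  [/\ inPs (take (size d).-1 d), pd_le d (take (size d).-1 d)
    & pd_rank (take (size d).-1 d) = pd_rank d + 1].
Proof.
move=> dP sd; have [_ [dn [d_sorted dB]]] := dP.
have [t size_d] : exists t, size d = t.+1 by exists (size d).-1; rewrite prednK // (ltn_trans _ sd).
rewrite size_d /= => last_top.
have size_e : size (take t d) = t by rewrite size_take size_d ltnSn.
split.
- rewrite /inP size_e; split; first by rewrite -ltnS -size_d.
  split; first by apply: leq_trans dn; rewrite size_d.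
  split=> [|k k_lt]; first exact: take_sorted.
  by rewrite nth_take //; apply: dB; rewrite size_d ltnW.
- by split=> [|k]; rewrite size_e ?size_d // => k_lt; rewrite nth_take.
- apply: (pd_rank_succ (i := t)); first by rewrite -ltnS -size_d.
    by rewrite /pd_height size_e ltnn size_d ltnSn last_top; ring.
  move=> j jt; rewrite /pd_height size_e size_d ltnS; case: ltnP => [j_lt | tj].
    by rewrite nth_take // ltnW.
  by rewrite leq_eqVlt (negbTE jt) ltnNge tj.
Qed.

Lemma pd_le_size_eq_lt d d' : pd_le d d' -> size d = size d' -> d <> d' ->
  exists2 i, (i < size d)%N & nth 0 d i < nth 0 d' i.
Proof.
move=> [_ le_dd'] size_eq neq_dd'.
have [/existsP [i lt_i] | /existsPn ge_i] := boolP [exists i : 'I_(size d), nth 0 d i < nth 0 d' i].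
  by exists i.
exfalso; apply: neq_dd'; apply: (eq_from_nth (x0 := 0)) => // i id.
apply/eqP; rewrite eq_le le_dd' -?size_eq //.
by have := ge_i (Ordinal id); rewrite -leNgt.
Qed.

Lemma pd_cover d d' : inPs d -> inPs d' -> pd_le d d' -> d <> d' ->
  exists e, [/\ inPs e, pd_le d e, pd_le e d' & pd_rank e = pd_rank d + 1].
Proof.
move=> dP d'P le_dd' neq_dd'; have [sd' le_nth] := le_dd'.
have [_ [_ [_ dB]]] := dP; have [s'd' [_ [_ d'B]]] := d'P.
have [d'd | dd'] := ltnP (size d') (size d).
  have [t size_d] : exists t, size d = t.+1.
    by exists (size d).-1; rewrite prednK // (leq_ltn_trans _ d'd).
  have td : (t < size d)%N by rewrite size_d.
  have d't : (size d' <= t)%N by rewrite -ltnS -size_d.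
  have [d_t_lt | d_t_ge] := ltP (nth 0 d t) (N + t%:Z).
    have [|eP le_de rank_e] := pd_raise_cover dP td d_t_lt; first by rewrite size_d ltnn.
    exists (pd_raise d t); split=> //; split=> [|k kd']; first by rewrite size_pd_raise // ltnW.
    by rewrite nth_pd_raise ifN ?le_nth // neq_ltn (leq_trans kd' d't).
  have d_t_top : nth 0 d t = N + t%:Z by apply/eqP; rewrite eq_le d_t_ge andbT; case: (dB t td).
  have := pd_truncate_cover dP (leq_ltn_trans s'd' d'd); rewrite size_d /= => /(_ d_t_top).
  case=> eP le_de rank_e; exists (take t d); split=> //.
  split=> [|k kd']; first by rewrite size_take td.
  by rewrite nth_take ?le_nth // (leq_trans kd' d't).
have size_eq : size d = size d' by apply/eqP; rewrite eqn_leq dd' sd'.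
have [i0 i0d lt_i0] := pd_le_size_eq_lt le_dd' size_eq neq_dd'.
pose P i := (i < size d)%N && (nth 0 d i < nth 0 d' i).
have exP : exists i, P i by exists i0; rewrite /P i0d lt_i0.
have ubP i : P i -> (i <= size d)%N by case/andP=> /ltnW.
have [i /andP [id lt_i] max_i] := ex_maxnP exP ubP.
have id' : (i < size d')%N by rewrite -size_eq.
have [_ d'_i_le] := d'B i id'.
have next_lt : (i.+1 < size d)%N -> nth 0 d i + 1 < nth 0 d i.+1.
  move=> i1d; have : ~~ P i.+1 by apply/negP => /max_i; rewrite ltnn.
  rewrite /P i1d /= -leNgt => ge_next.
  have -> : nth 0 d i.+1 = nth 0 d' i.+1.
    by apply/eqP; rewrite eq_le ge_next le_nth // -size_eq.
  by rewrite -lezD1 in lt_i; apply: le_lt_trans lt_i (inP_nth_lt d'P _); rewrite ltnSn -size_eq.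
have [eP le_de rank_e] := pd_raise_cover dP id (lt_le_trans lt_i d'_i_le) next_lt.
exists (pd_raise d i); split=> //; split=> [|k kd']; first by rewrite size_pd_raise // size_eq.
by rewrite nth_pd_raise; case: eqP => [-> | _]; rewrite ?lezD1 ?le_nth.
Qed.

Lemma maximal_chain_mem C e : maximal_chain n M N s C -> inPs e ->
  (forall c, C c -> pd_le c e \/ pd_le e c) -> C e.
Proof.
move=> [[CP Ccmp] Cmax] eP cmp_e.
have chain_Ce : chain n M N s (fun d => C d \/ d = e).
  split=> [d [/CP | ->] // | d d' [Cd | ->] [Cd' | ->]]; first exact: Ccmp.
  - exact: cmp_e.
  - by case: (cmp_e d' Cd'); [right | left].
  - by left; apply: pd_le_refl.
by apply: (Cmax _ chain_Ce) => [d Cd|]; [left | right].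
Qed.

Lemma maximal_chain_rank_succ C a b : maximal_chain n M N s C -> C a -> C b ->
  pd_rank a < pd_rank b -> exists2 e, C e & pd_rank e = pd_rank a + 1.
Proof.
move=> Cmax Ca Cb ab; have [[CP Ccmp] _] := Cmax; have aP := CP a Ca.
have [k bk] : exists k : nat, pd_rank b <= pd_rank a + k%:Z.
  by exists `|pd_rank b - pd_rank a|%N; lia.
elim: k b Cb ab bk => [|k IH] b Cb ab bk.
  by rewrite addr0 in bk; have := lt_le_trans ab bk; rewrite ltxx.
have bP := CP b Cb.
have le_ab : pd_le a b.
  by case: (Ccmp a b Ca Cb) => // /(pd_rank_le bP); rewrite leNgt ab.
have neq_ab : a <> b by move=> eab; move: ab; rewrite eab ltxx.
have [e [eP le_ae le_eb rank_e]] := pd_cover aP bP le_ab neq_ab.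
have [Ce | nCe] := classic (C e); first by exists e.
have [c Cc inc_ce] : exists2 c, C c & ~ (pd_le c e \/ pd_le e c).
  apply: NNPP => none; apply: nCe; apply: maximal_chain_mem => // c Cc.
  by apply: NNPP => inc; apply: none; exists c.
have cP := CP c Cc.
have le_ac : pd_le a c.
  case: (Ccmp a c Ca Cc) => // le_ca; case: inc_ce; left; exact: pd_le_trans le_ca le_ae.
have le_cb : pd_le c b.
  case: (Ccmp c b Cc Cb) => // le_bc; case: inc_ce; right; exact: pd_le_trans le_eb le_bc.
have neq_ac : a <> c by move=> eac; apply: inc_ce; left; rewrite -eac.
have neq_cb : c <> b by move=> ecb; apply: inc_ce; right; rewrite ecb.
have ac := pd_rank_lt aP cP le_ac neq_ac; have cb := pd_rank_lt cP bP le_cb neq_cb.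
apply: (IH c Cc ac); move: bk cb; rewrite -addn1 PoszD addrA; lia.
Qed.

Lemma maximal_chain_rank C r : maximal_chain n M N s C ->
  r%:Z <= pd_rank pd_top -> exists2 d, C d & pd_rank d = r%:Z.
Proof.
move=> Cmax; have [[CP _] _] := Cmax.
have Ctop : C pd_top.
  by apply: maximal_chain_mem inP_top _ => // c /CP cP; left; apply: pd_le_top.
elim: r => [_ | r IH r_top].
  exists pd_bot; last exact: pd_rank_bot.
  by apply: maximal_chain_mem inP_bot _ => // c /CP cP; right; apply: pd_le_bot.
have [a Ca rank_a] : exists2 a, C a & pd_rank a = r%:Z.
  by apply: IH; apply: le_trans r_top; rewrite lez_nat.
have [|e Ce rank_e] := maximal_chain_rank_succ Cmax Ca Ctop; first by rewrite rank_a; lia.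
by exists e; rewrite // rank_e rank_a -addn1 PoszD.
Qed.

Lemma maximal_chain_levels C : maximal_chain n M N s C ->
  exists ds, [/\ uniq ds, (size ds + s = n.+1 * `|N - M|.+1)%N & forall d, d \in ds -> C d].
Proof.
move=> Cmax; pose R := (s.+1 * `|N - M| + (n - s) * `|N - M|.+1)%N.
have rank_top : pd_rank pd_top = R%:Z.
  by rewrite pd_rank_top PoszD !PoszM -[s.+1]addn1 -[`|N - M|.+1]addn1 !PoszD gez0_abs ?subr_ge0.
have levels k : (k <= R.+1)%N ->
    exists2 ds, [seq pd_rank d | d <- ds] = [seq r%:Z | r <- iota 0 k] & forall d, d \in ds -> C d.
  elim: k => [_ | k IH kR]; first by exists [::].
  have [ds ds_rank ds_C] := IH (ltnW kR).
  have [|d Cd rank_d] := maximal_chain_rank (r := k) Cmax; first by rewrite rank_top lez_nat -ltnS.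
  exists (rcons ds d); last by move=> e; rewrite mem_rcons inE => /orP [/eqP -> | /ds_C].
  by rewrite map_rcons ds_rank -addn1 iotaD map_cat cats1 rank_d.
have [ds ds_rank ds_C] := levels R.+1 (leqnn _).
exists ds; split=> //.
  apply: (map_uniq (f := pd_rank)); rewrite ds_rank map_inj_uniq ?iota_uniq // => a b.
  by case.
move: (congr1 size ds_rank); rewrite !size_map size_iota => ->.
by rewrite /R -[in RHS](subnKC s_le_n); set k := (n - s)%N; set D := `|N - M|; nia.
Qed.

End RankFunction.

(** * Pure diagrams and the Herzog-Kuehl forms *)

Lemma size_prod_XsubC_neq (F : fieldType) k (x : 'I_k -> F) (i : 'I_k) :
  size (\prod_(j < k | j != i) ('X - (x j)%:P)) = k.
Proof.
rewrite -big_filter size_prod_XsubC size_filter.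
have := cardC1 i; rewrite card_ord cardE /enum_mem size_filter => ->.
by rewrite prednK // (leq_ltn_trans _ (ltn_ord i)).
Qed.

(* Up to sign, the sum is the coefficient of 'X^(k-1) in the Lagrange interpolant
   of 'X^m at the nodes x, which is 'X^m itself. *)
Lemma sum_pow_div_prod_sub_eq0 (F : fieldType) k (x : 'I_k -> F) m :
  injective x -> (m.+2 <= k)%N ->
  \sum_(i < k) x i ^+ m * \prod_(j < k | j != i) (x j - x i)^-1 = 0.
Proof.
move=> x_inj mk.
have x_sub_neq0 i j : j != i -> x i - x j != 0.
  by move=> ji; rewrite subr_eq0; apply: contra ji => /eqP /x_inj ->.
pose l i := \prod_(j < k | j != i) ('X - (x j)%:P).
pose c i := x i ^+ m * (\prod_(j < k | j != i) (x i - x j))^-1.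
have l_x i j : (l i).[x j] = if j == i then \prod_(j < k | j != i) (x i - x j) else 0.
  rewrite /l horner_prod; case: eqP => [-> | /eqP ji].
    by apply: eq_bigr => j' _; rewrite hornerXsubC.
  by rewrite (bigD1 j) //= hornerXsubC subrr mul0r.
have interp : \sum_(i < k) c i *: l i = 'X^m.
  apply/eqP; rewrite -subr_eq0; apply/eqP.
  apply: (@roots_geq_poly_eq0 _ _ [seq x j | j <- enum 'I_k]).
  - apply/allP => _ /mapP [j _ ->]; rewrite /root hornerD hornerN hornerXn horner_sum.
    rewrite (bigD1 j) //= big1 => [|i ij]; last by rewrite hornerZ l_x eq_sym (negbTE ij) mulr0.
    rewrite hornerZ l_x eqxx /c -mulrA mulVf ?mulr1 ?addr0 ?subrr //.
    by apply/prodf_neq0 => j' /x_sub_neq0.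
  - by rewrite map_inj_uniq ?enum_uniq.
  - rewrite size_map -cardE card_ord; apply: leq_trans (size_polyD _ _) _.
    rewrite geq_max size_polyN size_polyXn (ltnW mk) andbT.
    apply: leq_trans (size_sum _ _ _) _; apply/bigmax_leqP => i _.
    by apply: leq_trans (size_scale_leq _ _) _; rewrite size_prod_XsubC_neq.
have sum_c : \sum_(i < k) c i = 0.
  have := congr1 (fun p : {poly F} => p`_k.-1) interp.
  rewrite coefXn coef_sum (_ : (k.-1 == m) = false); last by apply/negbTE; lia.
  rewrite mulr0n => coef_eq; rewrite -[RHS]coef_eq; apply: eq_bigr => i _; rewrite coefZ.
  have := lead_coef_prod_XsubC (index_enum 'I_k) (fun j => j != i) x.
  by rewrite lead_coefE size_prod_XsubC_neq => ->; rewrite mulr1.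
have flip i : \prod_(j < k | j != i) (x j - x i)^-1 =
    (-1) ^+ k.-1 * (\prod_(j < k | j != i) (x i - x j))^-1.
  rewrite -prodfV (eq_bigr (fun j => - (x i - x j)^-1)) => [|j _]; last by rewrite -invrN opprB.
  by rewrite (prodrN (predC1 i)) cardC1 card_ord.
under eq_bigr do rewrite flip mulrCA.
by rewrite -mulr_sumr sum_c mulr0.
Qed.

Definition hk_form (n : nat) (M N : int) (m : nat) (beta : array) : rat :=
  \sum_(i < n.+1) \sum_(k < `|N - M|.+1)
     (-1) ^+ i * beta i (M + i%:Z + k%:Z) * ((M + i%:Z + k%:Z)%:~R) ^+ m.

Lemma hk_form_sum n M N m (I : Type) (r : seq I) (a : I -> rat) (F : I -> array) :
  hk_form n M N m (fun i j => \sum_(q <- r) a q * F q i j) =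
  \sum_(q <- r) a q * hk_form n M N m (F q).
Proof.
rewrite /hk_form.
under eq_bigr => i _ do under eq_bigr => k _ do rewrite mulr_sumr mulr_suml.
under eq_bigr => i _ do rewrite exchange_big /=.
rewrite exchange_big /=; apply: eq_bigr => q _.
rewrite mulr_sumr; apply: eq_bigr => i _; rewrite mulr_sumr; apply: eq_bigr => k _.
ring.
Qed.

Lemma eq_hk_form n M N m (b1 b2 : array) : (forall i j, b1 i j = b2 i j) ->
  hk_form n M N m b1 = hk_form n M N m b2.
Proof. by move=> eq_b; apply: eq_bigr => i _; apply: eq_bigr => k _; rewrite eq_b. Qed.

Lemma sum_band_single (M N : int) (i : nat) (F : int -> rat) (j0 : int) :
  M + i%:Z <= j0 <= N + i%:Z -> (forall j, j != j0 -> F j = 0) ->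
  \sum_(k < `|N - M|.+1) F (M + i%:Z + k%:Z) = F j0.
Proof.
move=> /andP [lo hi] F_j0.
have k0_lt : (absz (j0 - M - i%:Z)%R < `|N - M|.+1)%N by lia.
rewrite (bigD1 (Ordinal k0_lt)) //= big1 ?addr0 => [|k k_neq]; first by congr F; lia.
by apply: F_j0; apply: contra k_neq => /eqP jk; rewrite -val_eqE /=; lia.
Qed.

Lemma pure_out d i j : ~~ ((i < size d)%N && (j == nth 0 d i)) -> pure d i j = 0.
Proof. by rewrite /pure => /negbTE ->. Qed.

Section PureDiagrams.

Variables (n : nat) (M N : int) (s : nat).
Local Notation inPs := (inP n M N s).

Lemma pure_nth_neq0 d i : inPs d -> (i < size d)%N -> pure d i (nth 0 d i) != 0.
Proof.
move=> dP id; rewrite /pure id eqxx mulf_eq0 negb_or signr_eq0 /=.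
apply/prodf_neq0 => k ki; rewrite invr_eq0 intr_eq0 subr_eq0.
by apply: contra ki => /eqP /(inP_nth_inj dP (ltn_ord k) id) ->.
Qed.

Lemma inB_pure d : inPs d -> inB n M N (pure d).
Proof.
move=> [_ [dn [_ dB]]] i j; rewrite /pure.
case: ifP => [/andP [id /eqP ->] _ | _]; last by rewrite eqxx.
by split; [exact: leq_trans id dn | exact: dB].
Qed.

(* Up to the sign (-1)^i that pure and hk_form both carry, this is the
   Lagrange identity for the nodes d_0, ..., d_t. *)
Lemma hk_form_pure d m : inPs d -> (m.+2 <= size d)%N -> hk_form n M N m (pure d) = 0.
Proof.
move=> dP md; have [_ [dn [_ dB]]] := dP.
pose G i := (-1) ^+ i * pure d i (nth 0 d i) * (nth 0 d i)%:~R ^+ m.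
have row_sum i : \sum_(k < `|N - M|.+1)
    (-1) ^+ i * pure d i (M + i%:Z + k%:Z) * ((M + i%:Z + k%:Z)%:~R) ^+ m =
    if (i < size d)%N then G i else 0.
  case: ifP => id.
    apply: (sum_band_single (F := fun j => (-1) ^+ i * pure d i j * j%:~R ^+ m)).
      by have [lo hi] := dB i id; rewrite lo hi.
    by move=> j ji; rewrite pure_out ?mulr0 ?mul0r // id (negbTE ji).
  by apply: big1 => k _; rewrite pure_out ?mulr0 ?mul0r // id.
rewrite /hk_form (eq_bigr (fun i : 'I_n.+1 => if (i < size d)%N then G i else 0)) //.
rewrite -big_mkcond -(big_ord_widen n.+1 G dn) /G.
rewrite -[RHS](@sum_pow_div_prod_sub_eq0 _ _ (fun k : 'I_(size d) => (nth 0 d k)%:~R) m) //.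
  apply: eq_bigr => i _; rewrite /pure ltn_ord eqxx /= signrMK mulrC.
  by congr (_ * _); apply: eq_bigr => k _; rewrite intrB.
move=> a b /eqP; rewrite eqr_int => /eqP eab; apply: val_inj.
exact: inP_nth_inj dP (ltn_ord a) (ltn_ord b) eab.
Qed.

End PureDiagrams.

(** * Linear independence of chains *)

Lemma seq_has_min (T : eqType) (le : T -> T -> Prop) (r : seq T) :
    (forall x, le x x) -> (forall x y z, le x y -> le y z -> le x z) ->
    r != [::] -> (forall x y, x \in r -> y \in r -> le x y \/ le y x) ->
  exists2 x, x \in r & forall y, y \in r -> le x y.
Proof.
move=> le_refl le_trans; elim: r => [// | x r IH] _ cmp.
have [-> | r_nil] := eqVneq r [::].
  by exists x; rewrite ?mem_head // => y; rewrite inE => /eqP ->.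
have [|y yr min_y] := IH r_nil; first by move=> u v ur vr; apply: cmp; rewrite inE ?ur ?vr orbT.
have yxr : y \in x :: r by rewrite inE yr orbT.
have [le_xy | le_yx] := cmp x y (mem_head _ _) yxr.
  exists x; first exact: mem_head.
  by move=> z; rewrite inE => /orP [/eqP -> // | /min_y]; apply: le_trans.
by exists y => // z; rewrite inE => /orP [/eqP -> | /min_y].
Qed.

Lemma pure_vanish_above d d' : pd_le d d' -> d <> d' ->
  exists2 i, (i < size d)%N & forall e, pd_le d' e -> pure e i (nth 0 d i) = 0.
Proof.
move=> le_dd' neq_dd'; have [sd' le_nth] := le_dd'.
have [d'd | dd'] := ltnP (size d') (size d).
  exists (size d).-1 => [|e [se _]]; first by rewrite prednK // (leq_ltn_trans _ d'd).
  by apply: pure_out; apply/negP => /andP [ie _]; move: (leq_trans ie se) d'd; lia.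
have size_eq : size d = size d' by apply/eqP; rewrite eqn_leq dd' sd'.
have [i id lt_i] := pd_le_size_eq_lt le_dd' size_eq neq_dd'.
exists i => // e [_ le_e]; apply: pure_out; apply/negP => /andP [ie /eqP eq_i].
by have := le_e i ie; rewrite -eq_i leNgt lt_i.
Qed.

Lemma chain_separating_entry n M N s d0 (r : seq (seq int)) : inP n M N s d0 ->
    (forall e, e \in r -> pd_le d0 e /\ e <> d0) ->
    (forall e e', e \in r -> e' \in r -> pd_le e e' \/ pd_le e' e) ->
  exists2 i, (i < size d0)%N & forall e, e \in r -> pure e i (nth 0 d0 i) = 0.
Proof.
move=> d0P above r_cmp; have [-> | r_nil] := eqVneq r [::].
  by exists 0%N => //; have [+ _] := d0P; apply: leq_ltn_trans.
have [es esr min_es] := seq_has_min pd_le_refl pd_le_trans r_nil r_cmp.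
have [le_d0es neq_es] := above es esr.
have [i id0 vanish] := pure_vanish_above le_d0es (nesym neq_es).
by exists i => // e /min_es /vanish.
Qed.

Lemma lincomb_chain_eq0 n M N s ds c : uniq ds ->
    (forall d, d \in ds -> inP n M N s d) ->
    (forall d d', d \in ds -> d' \in ds -> pd_le d d' \/ pd_le d' d) ->
    (forall i j, lincomb ds c i j = 0) ->
  forall d, d \in ds -> c d = 0.
Proof.
move: {2}(size ds) (leqnn (size ds)) => k.
elim: k ds => [|k IH] ds ds_k ds_uniq dsP ds_cmp ds0 d dds.
  by move: ds_k dds; rewrite leqn0 => /nilP ->.
have [|d0 d0ds min_d0] := seq_has_min pd_le_refl pd_le_trans _ ds_cmp.
  by apply: contraTneq dds => ->.
set rest := rem d0 ds.
have rest_ds e : e \in rest -> e \in ds /\ e != d0.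
  by rewrite (mem_rem_uniq _ ds_uniq) inE => /andP [].
have split_d0 i j : lincomb ds c i j = c d0 * pure d0 i j + lincomb rest c i j.
  by rewrite /lincomb (big_rem d0 d0ds).
have [i id0 vanish] :
    exists2 i, (i < size d0)%N & forall e, e \in rest -> pure e i (nth 0 d0 i) = 0.
  apply: chain_separating_entry (dsP d0 d0ds) _ _ => [e /rest_ds [eds neq_e] | e e'].
    by split; [apply: min_d0 | apply/eqP].
  by move=> /rest_ds [eds _] /rest_ds [e'ds _]; apply: ds_cmp.
have c_d0 : c d0 = 0.
  have := ds0 i (nth 0 d0 i); rewrite split_d0 /lincomb big_seq big1 => [|e /vanish ->]; last first.
    by rewrite mulr0.
  have := pure_nth_neq0 (dsP d0 d0ds) id0.
  by rewrite addr0 => /negbTE pure_neq0 /eqP; rewrite mulf_eq0 pure_neq0 orbF => /eqP.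
have [-> // | d_neq] := eqVneq d d0.
apply: (IH rest) => [||e /rest_ds [/dsP] //|e e' /rest_ds [eds _] /rest_ds [e'ds _]|i' j'|].
- rewrite size_rem // -ltnS (leq_trans _ ds_k) // prednK // lt0n size_eq0.
  by apply: contraTneq dds => ->.
- exact: rem_uniq.
- exact: ds_cmp.
- by have := ds0 i' j'; rewrite split_d0 c_d0 mul0r add0r.
- by rewrite (mem_rem_uniq _ ds_uniq) inE d_neq.
Qed.

(** * Maximal chains span B^s *)

Lemma power_sums_weights_eq0 (F : fieldType) k (y u : 'I_k -> F) : injective y ->
  (forall m, (m < k)%N -> \sum_(b < k) u b * y b ^+ m = 0) -> forall b, u b = 0.
Proof.
move=> y_inj sums_eq0 b.
have V_free : row_free (Vandermonde k (\row_b y b))^T.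
  rewrite row_free_unit unitmx_tr unitmxE unitfE det_Vandermonde.
  apply/prodf_neq0 => i _; apply/prodf_neq0 => j ij; rewrite !mxE subr_eq0.
  by apply: contraTneq ij => /y_inj ->; rewrite ltnn.
have : (\row_b u b) *m (Vandermonde k (\row_b y b))^T = 0.
  apply/rowP => m; rewrite !mxE -[RHS](sums_eq0 m (ltn_ord m)).
  by apply: eq_bigr => i _; rewrite !mxE.
by move/eqP; rewrite mulmx_free_eq0 // => /eqP /rowP /(_ b); rewrite !mxE.
Qed.

Definition band_vec (n : nat) (M N : int) (beta : array) : 'rV[rat]_(n.+1 * `|N - M|.+1) :=
  mxvec (\matrix_(i < n.+1, k < `|N - M|.+1) beta i (M + i%:Z + k%:Z)).

Lemma band_vec_inj n M N b1 b2 : inB n M N b1 -> inB n M N b2 ->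
  band_vec n M N b1 = band_vec n M N b2 -> forall i j, b1 i j = b2 i j.
Proof.
move=> b1B b2B eq_vec i j.
have [/and3P [ni lo hi] | out] := boolP [&& (i <= n)%N, M + i%:Z <= j & j <= N + i%:Z].
  have k_lt : (absz (j - M - i%:Z)%R < `|N - M|.+1)%N by lia.
  pose x := mxvec_index (Ordinal (ni : (i < n.+1)%N)) (Ordinal k_lt).
  have := congr1 (fun v : 'rV_ _ => v 0 x) eq_vec.
  by rewrite /band_vec !mxvecE !mxE /= (_ : M + i%:Z + _ = j) //; lia.
have vanish b : inB n M N b -> b i j = 0.
  by move=> bB; apply/eqP; apply: contraNT out => /bB [-> [-> ->]].
by rewrite !vanish.
Qed.

Lemma mul_band_vec n M N p (F : 'I_p -> array) (w : 'rV[rat]_p) :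
  w *m \matrix_(q < p) band_vec n M N (F q) =
  band_vec n M N (fun i j => \sum_(q < p) w 0 q * F q i j).
Proof.
apply/rowP => x; case/mxvec_indexP: x => i k.
by rewrite /band_vec mxvecE !mxE; apply: eq_bigr => q _; rewrite !mxE mxvecE mxE.
Qed.

Lemma inB_sum n M N (I : eqType) (r : seq I) (a : I -> rat) (F : I -> array) :
  (forall q, q \in r -> inB n M N (F q)) ->
  inB n M N (fun i j => \sum_(q <- r) a q * F q i j).
Proof.
move=> FB i j sum_neq0.
have [/and3P [ni lo hi] | out] := boolP [&& (i <= n)%N, M + i%:Z <= j & j <= N + i%:Z]; first by [].
case/negP: sum_neq0; rewrite big_seq big1 // => q /FB qB.
by rewrite (_ : F q i j = 0) ?mulr0 //; apply/eqP; apply: contraNT out => /qB [-> [-> ->]].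
Qed.

Lemma inBs_lincomb n M N s ds c beta : (forall d, d \in ds -> inP n M N s d) ->
  (forall i j, beta i j = lincomb ds c i j) -> inBs n M N s beta.
Proof.
move=> dsP beta_eq; split=> [i j | m ms].
  by rewrite beta_eq; apply: inB_sum => d /dsP /inB_pure.
have pure_hk_eq0 : \sum_(d <- ds) c d * hk_form n M N m (pure d) = 0.
  rewrite big_seq big1 // => d /dsP dP; rewrite (hk_form_pure dP) ?mulr0 //.
  by case: dP => sd _; apply: leq_ltn_trans sd.
by rewrite -[RHS]pure_hk_eq0 -hk_form_sum; apply: eq_hk_form.
Qed.

Definition delta_array (M : int) (b : nat) : array :=
  fun i j => if (i == b) && (j == M + b%:Z) then 1 else 0.

Lemma inB_delta n M N b : M <= N -> (b <= n)%N -> inB n M N (delta_array M b).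
Proof.
move=> M_le_N bn i j; rewrite /delta_array.
by case: ifP => [/andP [/eqP -> /eqP ->] _ | _]; [split=> //; lia | rewrite eqxx].
Qed.

Lemma hk_form_delta n M N m b : M <= N -> (b <= n)%N ->
  hk_form n M N m (delta_array M b) = (-1) ^+ b * (M + b%:Z)%:~R ^+ m.
Proof.
move=> M_le_N bn; pose b' : 'I_n.+1 := Ordinal (bn : (b < n.+1)%N).
rewrite /hk_form (bigD1 b') //= [X in _ + X]big1 ?addr0 => [|i ib]; last first.
  rewrite -val_eqE /= in ib.
  by apply: big1 => k _; rewrite /delta_array (negbTE ib) mulr0 mul0r.
pose F j := (-1) ^+ b * delta_array M b b j * j%:~R ^+ m.
rewrite (sum_band_single (F := F) (j0 := M + b%:Z)) /F.
- by rewrite /delta_array !eqxx mulr1.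
- by rewrite lexx lerD2r.
- by move=> j /negbTE jb; rewrite /delta_array jb andbF mulr0 mul0r.
Qed.

Section Spanning.

Variables (n : nat) (M N : int) (s : nat) (ds : seq (seq int)).
Hypotheses (M_le_N : M <= N) (s_le_n : (s <= n)%N) (ds_uniq : uniq ds)
  (dsP : forall d, d \in ds -> inP n M N s d)
  (ds_cmp : forall d d', d \in ds -> d' \in ds -> pd_le d d' \/ pd_le d' d)
  (size_ds : (size ds + s)%N = (n.+1 * `|N - M|.+1)%N).

Local Notation K := (size ds).

(* Completing ds by the unit arrays at (b, M + b), b < s, gives a basis of B_{M,N}. *)
Definition family (q : 'I_(K + s)) : array :=
  match split q with inl a => pure (nth [::] ds a) | inr b => delta_array M b end.

Definition comb (w : 'rV[rat]_(K + s)) : array := fun i j => \sum_q w 0 q * family q i j.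

Definition chain_coef (w : 'rV[rat]_(K + s)) (d : seq int) : rat :=
  \sum_(a < K | nth [::] ds a == d) w 0 (lshift s a).

Lemma family_lshift a : family (lshift s a) = pure (nth [::] ds a).
Proof. by rewrite /family -[lshift s a]/(unsplit (inl a)) unsplitK. Qed.

Lemma family_rshift b : family (rshift K b) = delta_array M b.
Proof. by rewrite /family -[rshift K b]/(unsplit (inr b)) unsplitK. Qed.

Lemma nth_dsP (a : 'I_K) : inP n M N s (nth [::] ds a).
Proof. exact/dsP/mem_nth. Qed.

Lemma comb_inB (w : 'rV[rat]_(K + s)) : inB n M N (comb w).
Proof.
apply: inB_sum => q _; rewrite /family; case: split => [a | b]; first exact/inB_pure/nth_dsP.
by apply: inB_delta => //; exact: leq_trans (ltnW (ltn_ord b)) s_le_n.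
Qed.

Lemma comb_delta_coef_eq0 (w : 'rV[rat]_(K + s)) :
  (forall m, (m < s)%N -> hk_form n M N m (comb w) = 0) -> forall b, w 0 (rshift K b) = 0.
Proof.
move=> comb_hk b.
have nodes_inj : injective (fun b : 'I_s => ((M + b%:Z)%:~R : rat)).
  by move=> b1 b2 /eqP; rewrite eqr_int => /eqP eq_b; apply: ord_inj; lia.
have sums_eq0 m : (m < s)%N ->
    \sum_(b < s) (w 0 (rshift K b) * (-1) ^+ b) * (M + b%:Z)%:~R ^+ m = 0.
  move=> ms; rewrite -[RHS](comb_hk m ms) hk_form_sum big_split_ord /=.
  rewrite [X in _ = X + _]big1 ?add0r => [|a _].
    apply: eq_bigr => b' _; rewrite family_rshift hk_form_delta ?mulrA //.
    exact: leq_trans (ltnW (ltn_ord b')) s_le_n.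
  have [sd _] := nth_dsP a.
  by rewrite family_lshift (hk_form_pure (nth_dsP a)) ?mulr0 //; apply: leq_ltn_trans sd.
have /eqP := power_sums_weights_eq0 nodes_inj sums_eq0 b.
by rewrite mulf_eq0 signr_eq0 orbF => /eqP.
Qed.

Lemma chain_coef_nth (w : 'rV[rat]_(K + s)) (a : 'I_K) :
  chain_coef w (nth [::] ds a) = w 0 (lshift s a).
Proof.
rewrite /chain_coef (bigD1 a) //= big1 ?addr0 // => a' /andP [/eqP eq_nth a'a].
by move: a'a; rewrite -val_eqE /= -(nth_uniq [::] (ltn_ord a') (ltn_ord a) ds_uniq) eq_nth eqxx.
Qed.

Lemma comb_lincomb (w : 'rV[rat]_(K + s)) : (forall b, w 0 (rshift K b) = 0) ->
  forall i j, comb w i j = lincomb ds (chain_coef w) i j.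
Proof.
move=> delta0 i j; rewrite /comb big_split_ord /= [X in _ + X]big1 ?addr0 => [|b _]; last first.
  by rewrite delta0 mul0r.
rewrite /lincomb (big_nth [::]) big_mkord; apply: eq_bigr => a _.
by rewrite family_lshift chain_coef_nth.
Qed.

Lemma family_free : row_free (\matrix_q band_vec n M N (family q)).
Proof.
apply: inj_row_free => w; rewrite mul_band_vec => comb_vec0.
have zeroB : inB n M N (fun _ _ => 0) by move=> i j; rewrite eqxx.
have zero_vec : band_vec n M N (fun _ _ => 0) = 0.
  by apply/rowP => x; case/mxvec_indexP: x => i k; rewrite mxvecE !mxE.
have comb0 := band_vec_inj (@comb_inB w) zeroB (etrans comb_vec0 (esym zero_vec)).
have delta0 : forall b, w 0 (rshift K b) = 0.
  apply: comb_delta_coef_eq0 => m _; rewrite (eq_hk_form n M N m comb0).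
  by apply: big1 => i _; apply: big1 => k _; rewrite mulr0 mul0r.
have lincomb0 i j : lincomb ds (chain_coef w) i j = 0 by rewrite -comb_lincomb ?comb0.
have chain0 := lincomb_chain_eq0 ds_uniq dsP ds_cmp lincomb0.
apply/rowP => q; rewrite mxE -(splitK q); case: (split q) => [a | b] /=; last exact: delta0.
by rewrite -chain_coef_nth; apply: chain0; apply: mem_nth.
Qed.

Lemma inBs_span beta : inBs n M N s beta -> exists c, forall i j, beta i j = lincomb ds c i j.
Proof.
move=> [betaB beta_hk].
have full : row_full (\matrix_q band_vec n M N (family q)).
  by rewrite /row_full (eqP family_free) size_ds.
have /submxP [w] := submx_full (band_vec n M N beta) full.
rewrite mul_band_vec => /(band_vec_inj betaB (@comb_inB w)) beta_comb.
exists (chain_coef w) => i j; rewrite beta_comb comb_lincomb //.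
by apply: comb_delta_coef_eq0 => m ms; rewrite -(eq_hk_form n M N m beta_comb); apply: beta_hk.
Qed.

End Spanning.

Unset Implicit Arguments.

Theorem proposition2p3 (n : nat) (M N : int) :
  (1 <= n)%N -> M <= N ->
  forall s : nat, (s <= n)%N ->
  forall C : seq int -> Prop, maximal_chain n M N s C -> is_basis_Bs n M N s C.
Proof.
(* The argument does not need 1 <= n. *)
move=> _ M_le_N s s_le_n C Cmax; have [[CP Ccmp] _] := Cmax.
split=> [ds c ds_uniq dsC | beta].
  apply: (@lincomb_chain_eq0 n M N s) => // [d /dsC /CP // | d d' /dsC Cd /dsC Cd'].
  exact: Ccmp.
split=> [betaBs | [ds [c [dsC beta_eq]]]]; last first.
  by apply: inBs_lincomb beta_eq => d /dsC /CP.
have [ds [ds_uniq size_ds dsC]] := maximal_chain_levels M_le_N s_le_n Cmax.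
have dsP d : d \in ds -> inP n M N s d by move/dsC/CP.
have ds_cmp d d' : d \in ds -> d' \in ds -> pd_le d d' \/ pd_le d' d.
  by move=> /dsC Cd /dsC Cd'; apply: Ccmp.
have [c beta_eq] := inBs_span M_le_N s_le_n ds_uniq dsP ds_cmp size_ds betaBs.
by exists ds, c.
Qed.
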